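(* Let $A^+,A^-\in\mathbb R^3$ be distinct non-colinear unit vectors and let $\chi$ be the self-similar solution of the binormal flow with $\chi(0,x)=A^+x$ for $x\ge0$ and $\chi(0,x)=A^-x$ for $x\le0$, with associated complex vectors $B^\pm$. Let $\rho$ be the rotation of angle $\pi$ around the axis directed by $A^+-A^-$. Let $\chi^*$ be the self-similar solution with initial data $\chi^*(0,x)=\chi(0,-x)$, i.e. $\chi^*(0,x)=-A^-x$ for $x\ge0$ and $-A^+x$ for $x\le0$, with associated corner vectors $A^{\pm*}$ (so $\chi^*(0,x)=A^{+*}x$ for $x\geq 0$, $A^{-*}x$ for $x\le 0$) and complex vectors $B^{\pm*}$. Then $$A^{\pm*}=\rho(A^\pm)=-A^\mp=R^\mp(-A^\mp),\qquad B^{\pm*}=\rho(B^\pm)=R^\mp\overline{B^\mp},$$ where $R^\mp$ is a rotation of angle $2\theta$ in the plane $\Pi^\mp$ orthogonal to $A^\mp$ (the plane spanned by $\Re B^\mp$ and $\Im B^\mp$), $\theta$ being the angle between $\Re B^\mp$ and the plane $\Pi$ spanned by $A^+$ and $A^-$.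
   Context: The binormal flow is $\chi_t=\chi_x\wedge\chi_{xx}$ for curves in $\mathbb R^3$ parametrized by arclength $x$, with Frenet frame $(T,n,b)$, curvature $c$, torsion $\tau$. Known facts used as setting: for distinct non-colinear unit vectors $A^\pm$ there is a unique self-similar solution $\chi(t,x)=\sqrt t\,G(x/\sqrt t)$, $t>0$, with $\chi(0,x)=A^+x$ for $x\ge0$ and $A^-x$ for $x\le0$; its curvature and torsion are $a/\sqrt t$ and $x/(2t)$ with $a>0$ determined by $\sin\frac{\widehat{(A^+,-A^-)}}2=e^{-\pi a^2/2}$, and there are complex vectors $B^\pm$ orthogonal to $A^\pm$ (with $\Re B^\pm\perp\Im B^\pm$, $|\Re B^\pm|=|\Im B^\pm|=1$) given by $B^\pm=\lim_{x\to\pm\infty}(n+ib)(t,x)e^{i\int_0^x\tau(t,s)ds}e^{-ia^2\log\sqrt t+ia^2\log|x|}$. *)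

From Stdlib Require Import Reals.
From Coquelicot Require Import Coquelicot.
Open Scope R_scope.

Record V3 := mkV { v1 : R; v2 : R; v3 : R }.

Definition vadd (u v : V3) : V3 := mkV (v1 u + v1 v) (v2 u + v2 v) (v3 u + v3 v).
Definition vscale (c : R) (v : V3) : V3 := mkV (c * v1 v) (c * v2 v) (c * v3 v).
Definition vopp (v : V3) : V3 := vscale (-1) v.
Definition vsub (u v : V3) : V3 := vadd u (vopp v).
Definition vdot (u v : V3) : R := v1 u * v1 v + v2 u * v2 v + v3 u * v3 v.
Definition vcross (u v : V3) : V3 :=
  mkV (v2 u * v3 v - v3 u * v2 v) (v3 u * v1 v - v1 u * v3 v) (v1 u * v2 v - v2 u * v1 v).
Definition vnorm (v : V3) : R := sqrt (vdot v v).

(** Complex vectors of C^3, written Re + i Im *)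
Record CV3 := mkCV { cre : V3; cim : V3 }.
Definition cconj (B : CV3) : CV3 := mkCV (cre B) (vopp (cim B)).
Definition capply (f : V3 -> V3) (B : CV3) : CV3 := mkCV (f (cre B)) (f (cim B)).

(** Rotation of angle phi around the unit axis k (Rodrigues' formula). *)
Definition rot (k : V3) (phi : R) (v : V3) : V3 :=
  vadd (vadd (vscale (cos phi) v) (vscale (sin phi) (vcross k v)))
       (vscale ((1 - cos phi) * vdot k v) k).

Definition rho (Ap Am : V3) (v : V3) : V3 :=
  rot (vscale (/ vnorm (vsub Ap Am)) (vsub Ap Am)) PI v.

(** Unsigned angle in [0, pi/2] between a nonzero vector v and the plane
    spanned by the non-colinear vectors Ap, Am. *)
Definition angle_vec_plane (v Ap Am : V3) : R :=
  let N := vcross Ap Am in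
  asin (Rabs (vdot v N) / (vnorm v * vnorm N)).

Definition angle (u v : V3) : R := acos (vdot u v).

Definition vderivable (f : R -> V3) (x : R) : Prop :=
  ex_derive (fun y => v1 (f y)) x /\ ex_derive (fun y => v2 (f y)) x /\
  ex_derive (fun y => v3 (f y)) x.
Definition vD (f : R -> V3) (x : R) : V3 :=
  mkV (Derive (fun y => v1 (f y)) x) (Derive (fun y => v2 (f y)) x)
      (Derive (fun y => v3 (f y)) x).

(** A curve evolving in time: chi t x, t time, x arclength parameter. *)
Definition dx (chi : R -> R -> V3) (t x : R) : V3 := vD (chi t) x.
Definition dxx (chi : R -> R -> V3) (t x : R) : V3 := vD (dx chi t) x.
Definition dxxx (chi : R -> R -> V3) (t x : R) : V3 := vD (dxx chi t) x.
Definition dt (chi : R -> R -> V3) (t x : R) : V3 := vD (fun s => chi s x) t.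

Definition curv chi t x : R := vnorm (dxx chi t x).
Definition normal chi t x : V3 := vscale (/ curv chi t x) (dxx chi t x).
Definition binormal chi t x : V3 := vcross (dx chi t x) (normal chi t x).
Definition tors chi t x : R :=
  vdot (vcross (dx chi t x) (dxx chi t x)) (dxxx chi t x) / (curv chi t x ^ 2).

Definition binormal_flow (chi : R -> R -> V3) : Prop :=
  forall t x, 0 < t ->
    vderivable (fun s => chi s x) t /\
    vderivable (chi t) x /\ vderivable (dx chi t) x /\ vderivable (dxx chi t) x /\
    vnorm (dx chi t x) = 1 /\
    dt chi t x = vcross (dx chi t x) (dxx chi t x).

Definition selfsimilar_solution (Ap Am : V3) (a : R) (chi : R -> R -> V3) : Prop :=
  binormal_flow chi /\
  (exists G : R -> V3, forall t x, 0 < t -> chi t x = vscale (sqrt t) (G (x / sqrt t))) /\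
  (forall x, 0 <= x -> chi 0 x = vscale x Ap) /\
  (forall x, x <= 0 -> chi 0 x = vscale x Am) /\
  (forall x eps, 0 < eps -> exists delta, 0 < delta /\
      forall t, 0 < t < delta -> vnorm (vsub (chi t x) (chi 0 x)) < eps) /\
  (forall t x, 0 < t -> curv chi t x = a / sqrt t) /\
  (forall t x, 0 < t -> tors chi t x = x / (2 * t)).

Definition corner_param (Ap Am : V3) (a : R) : Prop :=
  0 < a /\ sin (angle Ap (vopp Am) / 2) = exp (- PI * a ^ 2 / 2).

(** The modulated frame (n + i b)(t,x) e^{i Phi(t,x)} with
    Phi = int_0^x tau(t,s) ds - a^2 log sqrt t + a^2 log |x|. *)
Definition phase (chi : R -> R -> V3) (a t x : R) : R :=
  RInt (fun s => tors chi t s) 0 x - a ^ 2 * ln (sqrt t) + a ^ 2 * ln (Rabs x).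
Definition modframe (chi : R -> R -> V3) (a t x : R) : CV3 :=
  let P := phase chi a t x in
  let n := normal chi t x in
  let b := binormal chi t x in
  mkCV (vsub (vscale (cos P) n) (vscale (sin P) b))
       (vadd (vscale (sin P) n) (vscale (cos P) b)).

Definition vlim_pinfty (f : R -> V3) (l : V3) : Prop :=
  forall eps, 0 < eps -> exists M, forall x, M < x -> vnorm (vsub (f x) l) < eps.
Definition vlim_minfty (f : R -> V3) (l : V3) : Prop :=
  forall eps, 0 < eps -> exists M, forall x, x < M -> vnorm (vsub (f x) l) < eps.

Definition is_Bplus (chi : R -> R -> V3) (a : R) (B : CV3) : Prop :=
  forall t, 0 < t ->
    vlim_pinfty (fun x => cre (modframe chi a t x)) (cre B) /\
    vlim_pinfty (fun x => cim (modframe chi a t x)) (cim B).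
Definition is_Bminus (chi : R -> R -> V3) (a : R) (B : CV3) : Prop :=
  forall t, 0 < t ->
    vlim_minfty (fun x => cre (modframe chi a t x)) (cre B) /\
    vlim_minfty (fun x => cim (modframe chi a t x)) (cim B).

Definition rotation_2theta (k Ap Am : V3) (B : CV3) (Rf : V3 -> V3) : Prop :=
  let th := angle_vec_plane (cre B) Ap Am in
  exists phi, (phi = 2 * th \/ phi = - (2 * th)) /\ forall v, Rf v = rot k phi v.

(* Both chi and chi* have curvature a / sqrt t and torsion x / (2 t): the
   parameter a only depends on the angle of the corner, which is the same for
   both.  At t = 1 the Frenet frame of chi*(1, .), that of chi(1, .), and the
   indirect frame (-T(-x), n(-x), b(-x)) of the reversed curve solve the same
   linear system, so chi*(1, x) = M chi(1, x) + p with M a rotation and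
   chi*(1, x) = M' chi(1, -x) + p' with M' orientation reversing.
   Self-similarity carries both relations down to t = 0: M swaps A+ and -A-,
   hence M = rho, and M' fixes A+ and A-, hence M' is the reflection across
   the plane Pi.  Transporting the modulated frames and letting x -> +-oo gives
   B+-* = rho B+- and B+-* = M' B-+.  Finally (Re B-+, Im B-+, A-+) is a direct
   orthonormal frame, A-+ being the limit of the tangent, and in this frame
   the reflection across Pi is conjugation followed by the rotation of angle
   +-2 theta about A-+. *)

From Stdlib Require Import Reals Lra Psatz.
From Coquelicot Require Import Coquelicot.
Open Scope R_scope.

Definition vzero : V3 := mkV 0 0 0.

Lemma V3_ext u v : v1 u = v1 v -> v2 u = v2 v -> v3 u = v3 v -> u = v.
Proof. destruct u, v; simpl; intros; subst; reflexivity. Qed.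

Ltac vunfold := unfold vsub, vopp, vadd, vscale, vdot, vcross, vzero in *; simpl in *.
Ltac vring :=
  apply V3_ext; unfold vsub, vopp, vadd, vscale, vdot, vcross, vzero; simpl;
  try unfold Rdiv; ring.

Lemma vdot_comm u v : vdot u v = vdot v u.
Proof. vunfold; ring. Qed.

Lemma vcross_vcross u v w :
  vcross u (vcross v w) = vsub (vscale (vdot u w) v) (vscale (vdot u v) w).
Proof. vring. Qed.

Lemma vdot_vcross_vcross u v w z :
  vdot (vcross u v) (vcross w z) = vdot u w * vdot v z - vdot u z * vdot v w.
Proof. vunfold; ring. Qed.

Lemma vdot_vcross_self u v :
  vdot (vcross u v) (vcross u v) = vdot u u * vdot v v - vdot u v ^ 2.
Proof. vunfold; ring. Qed.

Lemma vscale_triple_decomp u v w z :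
  vscale (vdot u (vcross v w)) z =
  vadd (vadd (vscale (vdot z (vcross v w)) u) (vscale (vdot z (vcross w u)) v))
       (vscale (vdot z (vcross u v)) w).
Proof. vring. Qed.

Lemma vscale1 v : vscale 1 v = v.
Proof. vring. Qed.

Lemma vscale_inj c u v : c <> 0 -> vscale c u = vscale c v -> u = v.
Proof.
  intros hc H.
  assert (E : forall w, w = vscale (/ c) (vscale c w))
    by (intros; apply V3_ext; vunfold; field; auto).
  now rewrite (E u), (E v), H.
Qed.

Lemma vdot_ge0 v : 0 <= vdot v v.
Proof. vunfold; nra. Qed.

Lemma vnorm_ge0 v : 0 <= vnorm v.
Proof. apply sqrt_pos. Qed.

Lemma vnorm_sqr v : vnorm v * vnorm v = vdot v v.
Proof. apply sqrt_sqrt, vdot_ge0. Qed.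

Lemma vdot_unit v : vnorm v = 1 -> vdot v v = 1.
Proof. intros H. now rewrite <- vnorm_sqr, H, Rmult_1_r. Qed.

Lemma vdot_self_eq0 v : vdot v v = 0 -> v = vzero.
Proof. intros H. apply V3_ext; vunfold; nra. Qed.

Lemma vdot_self_pos v : v <> vzero -> 0 < vdot v v.
Proof.
  intros H. destruct (vdot_ge0 v) as [h | h]; [exact h |].
  exfalso. now apply H, vdot_self_eq0.
Qed.

Lemma vsub_eq0 u v : vsub u v = vzero -> u = v.
Proof. intros H. apply V3_ext; vunfold; injection H; lra. Qed.

Lemma vdot_le_vnorm u v : Rabs (vdot u v) <= vnorm u * vnorm v.
Proof.
  unfold vnorm. rewrite <- sqrt_mult by apply vdot_ge0. rewrite <- sqrt_Rsqr_abs.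
  apply sqrt_le_1_alt. unfold Rsqr.
  pose proof (vdot_vcross_self u v). pose proof (vdot_ge0 (vcross u v)). nra.
Qed.

Lemma vnorm_triangle u v : vnorm (vadd u v) <= vnorm u + vnorm v.
Proof.
  pose proof (vnorm_ge0 u); pose proof (vnorm_ge0 v); pose proof (vnorm_ge0 (vadd u v)).
  assert (E : vdot (vadd u v) (vadd u v) = vdot u u + 2 * vdot u v + vdot v v) by (vunfold; ring).
  rewrite <- !vnorm_sqr in E.
  pose proof (vdot_le_vnorm u v). pose proof (Rle_abs (vdot u v)). nra.
Qed.

Lemma vnorm_scale c v : vnorm (vscale c v) = Rabs c * vnorm v.
Proof.
  unfold vnorm.
  replace (vdot (vscale c v) (vscale c v)) with (Rsqr c * vdot v v) by (unfold Rsqr; vunfold; ring).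
  rewrite sqrt_mult_alt by apply Rle_0_sqr. now rewrite sqrt_Rsqr_abs.
Qed.

Lemma vnorm_opp v : vnorm (vopp v) = vnorm v.
Proof. unfold vopp. rewrite vnorm_scale, Rabs_left by lra. ring. Qed.

Lemma vcomp_le_vnorm v :
  Rabs (v1 v) <= vnorm v /\ Rabs (v2 v) <= vnorm v /\ Rabs (v3 v) <= vnorm v.
Proof.
  unfold vnorm. rewrite <- !sqrt_Rsqr_abs. unfold Rsqr.
  split; [|split]; apply sqrt_le_1_alt; vunfold; nra.
Qed.

(** * Orthonormal frames *)

Definition orthonormal (u w : V3) : Prop := vdot u u = 1 /\ vdot w w = 1 /\ vdot u w = 0.

Record frame := Frame { fT : V3; fN : V3; fB : V3 }.

Definition oriented_frame (F : frame) (s : R) : Prop :=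
  orthonormal (fT F) (fN F) /\ fB F = vscale s (vcross (fT F) (fN F)) /\ s * s = 1.

Definition frame_map (E F : frame) (v : V3) : V3 :=
  vadd (vadd (vscale (vdot v (fT F)) (fT E)) (vscale (vdot v (fN F)) (fN E)))
       (vscale (vdot v (fB F)) (fB E)).

Lemma orthonormal_vcross_l u w : orthonormal u w -> vcross w (vcross u w) = u.
Proof. intros [h1 [h2 h3]]. rewrite vcross_vcross, (vdot_comm w u), h2, h3. vring. Qed.

Lemma orthonormal_vcross_r u w : orthonormal u w -> vcross (vcross u w) u = w.
Proof.
  intros [h1 [h2 h3]].
  replace (vcross (vcross u w) u) with (vsub (vscale (vdot u u) w) (vscale (vdot w u) u)) by vring.
  rewrite (vdot_comm w u), h1, h3. vring.
Qed.

Lemma orthonormal_expand u w v : orthonormal u w ->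
  v = vadd (vadd (vscale (vdot v u) u) (vscale (vdot v w) w))
           (vscale (vdot v (vcross u w)) (vcross u w)).
Proof.
  intros H. pose proof (vscale_triple_decomp u w (vcross u w) v) as C.
  rewrite (orthonormal_vcross_l _ _ H), (orthonormal_vcross_r _ _ H) in C.
  destruct H as [h1 [h2 h3]]. rewrite h1, vscale1 in C. exact C.
Qed.

Section OrientedFrame.
Variables (F : frame) (s : R).
Hypothesis HF : oriented_frame F s.

Lemma oriented_frame_vdot :
  vdot (fT F) (fT F) = 1 /\ vdot (fN F) (fN F) = 1 /\ vdot (fB F) (fB F) = 1 /\
  vdot (fT F) (fN F) = 0 /\ vdot (fT F) (fB F) = 0 /\ vdot (fN F) (fB F) = 0.
Proof.
  destruct HF as [[h1 [h2 h3]] [hb hs]]. rewrite hb. repeat split; auto.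
  - replace (vdot (vscale s (vcross (fT F) (fN F))) (vscale s (vcross (fT F) (fN F))))
      with (s * s * vdot (vcross (fT F) (fN F)) (vcross (fT F) (fN F))) by (vunfold; ring).
    rewrite vdot_vcross_self, h1, h2, h3, hs. ring.
  - vunfold; ring.
  - vunfold; ring.
Qed.

Lemma oriented_frame_expand v :
  v = vadd (vadd (vscale (vdot v (fT F)) (fT F)) (vscale (vdot v (fN F)) (fN F)))
           (vscale (vdot v (fB F)) (fB F)).
Proof.
  destruct HF as [h [hb hs]]. rewrite (orthonormal_expand _ _ v h) at 1.
  rewrite hb. apply V3_ext; vunfold; ring_simplify;
    replace (s ^ 2) with (s * s) by ring; rewrite hs; ring.
Qed.

Lemma oriented_frame_vcross :
  vcross (fT F) (fN F) = vscale s (fB F) /\ vcross (fN F) (fB F) = vscale s (fT F) /\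
  vcross (fB F) (fT F) = vscale s (fN F).
Proof.
  destruct HF as [h [hb hs]]. rewrite hb. repeat split.
  - apply V3_ext; vunfold; ring_simplify; replace (s ^ 2) with (s * s) by ring; rewrite hs; ring.
  - replace (vcross (fN F) (vscale s (vcross (fT F) (fN F))))
      with (vscale s (vcross (fN F) (vcross (fT F) (fN F)))) by vring.
    now rewrite (orthonormal_vcross_l _ _ h).
  - replace (vcross (vscale s (vcross (fT F) (fN F))) (fT F))
      with (vscale s (vcross (vcross (fT F) (fN F)) (fT F))) by vring.
    now rewrite (orthonormal_vcross_r _ _ h).
Qed.

End OrientedFrame.

Lemma oriented_frame_scale_T F s : oriented_frame F 1 -> s * s = 1 ->
  oriented_frame (Frame (vscale s (fT F)) (fN F) (fB F)) s.
Proof.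
  intros [[g1 [g2 g3]] [g4 _]] hs. unfold oriented_frame, orthonormal; cbn [fT fN fB].
  split; [split; [|split] | split]; [| exact g2 | | | exact hs].
  - replace (vdot (vscale s (fT F)) (vscale s (fT F))) with (s * s * vdot (fT F) (fT F))
      by (vunfold; ring).
    rewrite hs, g1. ring.
  - replace (vdot (vscale s (fT F)) (fN F)) with (s * vdot (fT F) (fN F)) by (vunfold; ring).
    rewrite g3. ring.
  - rewrite g4, vscale1.
    apply V3_ext; vunfold; ring_simplify; replace (s ^ 2) with (s * s) by ring; rewrite hs; ring.
Qed.

Lemma frame_map_add E F u w : frame_map E F (vadd u w) = vadd (frame_map E F u) (frame_map E F w).
Proof. unfold frame_map; vring. Qed.

Lemma frame_map_scale E F c u : frame_map E F (vscale c u) = vscale c (frame_map E F u).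
Proof. unfold frame_map; vring. Qed.

Lemma frame_map_sub E F u w : frame_map E F (vsub u w) = vsub (frame_map E F u) (frame_map E F w).
Proof. unfold frame_map; vring. Qed.

Section FrameMap.
Variables (E F : frame) (s : R).
Hypotheses (HE : oriented_frame E 1) (HF : oriented_frame F s).

Lemma frame_map_vdot u w : vdot (frame_map E F u) (frame_map E F w) = vdot u w.
Proof.
  destruct (oriented_frame_vdot E 1 HE) as [a1 [a2 [a3 [a4 [a5 a6]]]]].
  rewrite (oriented_frame_expand F s HF w) at 2.
  unfold frame_map. set (T := fT E) in *. set (N := fN E) in *. set (B := fB E) in *.
  transitivity (vdot u (fT F) * vdot w (fT F) * vdot T T + vdot u (fN F) * vdot w (fN F) * vdot N N
    + vdot u (fB F) * vdot w (fB F) * vdot B B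
    + (vdot u (fT F) * vdot w (fN F) + vdot u (fN F) * vdot w (fT F)) * vdot T N
    + (vdot u (fT F) * vdot w (fB F) + vdot u (fB F) * vdot w (fT F)) * vdot T B
    + (vdot u (fN F) * vdot w (fB F) + vdot u (fB F) * vdot w (fN F)) * vdot N B).
  - unfold vdot at 1 2 3 4 5 6 7; vunfold; ring.
  - rewrite a1, a2, a3, a4, a5, a6. vunfold; ring.
Qed.

Lemma frame_map_vnorm v : vnorm (frame_map E F v) = vnorm v.
Proof. unfold vnorm. now rewrite frame_map_vdot. Qed.

Lemma frame_map_vcross u w :
  vcross (frame_map E F u) (frame_map E F w) = vscale s (frame_map E F (vcross u w)).
Proof.
  assert (X : forall a1 a2 a3 b1 b2 b3 e1 e2 e3,
    vcross (vadd (vadd (vscale a1 e1) (vscale a2 e2)) (vscale a3 e3))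
           (vadd (vadd (vscale b1 e1) (vscale b2 e2)) (vscale b3 e3)) =
    vadd (vadd (vscale (a1 * b2 - a2 * b1) (vcross e1 e2))
               (vscale (a2 * b3 - a3 * b2) (vcross e2 e3)))
         (vscale (a3 * b1 - a1 * b3) (vcross e3 e1))) by (intros; vring).
  unfold frame_map at 1 2. rewrite X.
  destruct (oriented_frame_vcross E 1 HE) as [c1 [c2 c3]]. rewrite c1, c2, c3.
  rewrite <- !vdot_vcross_vcross.
  destruct (oriented_frame_vcross F s HF) as [d1 [d2 d3]]. rewrite d1, d2, d3.
  unfold frame_map. vring.
Qed.

End FrameMap.

Definition linear_map (M : V3 -> V3) : Prop :=
  (forall u w, M (vadd u w) = vadd (M u) (M w)) /\ (forall c u, M (vscale c u) = vscale c (M u)).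

Lemma linear_map_frame_map E F : linear_map (frame_map E F).
Proof. split; [apply frame_map_add | apply frame_map_scale]. Qed.

Lemma linear_ext_basis (L1 L2 : V3 -> V3) u w : linear_map L1 -> linear_map L2 ->
  vcross u w <> vzero ->
  L1 u = L2 u -> L1 w = L2 w -> L1 (vcross u w) = L2 (vcross u w) -> forall v, L1 v = L2 v.
Proof.
  intros [a1 s1] [a2 s2] hN hu hw hC v. set (N := vcross u w) in *.
  assert (hd : vdot u (vcross w N) <> 0).
  { replace (vdot u (vcross w N)) with (vdot N N) by (unfold N; vunfold; ring).
    apply Rgt_not_eq, vdot_self_pos, hN. }
  assert (Ev : v = vscale (/ vdot u (vcross w N)) (vscale (vdot u (vcross w N)) v))
    by (apply V3_ext; vunfold; field; auto).
  rewrite Ev, vscale_triple_decomp, s1, s2, !a1, !a2, !s1, !s2, hu, hw, hC. reflexivity.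
Qed.

(** * Derivatives of vector functions *)

Lemma is_derive_Rplus (f g : R -> R) x df dg : is_derive f x df -> is_derive g x dg ->
  is_derive (fun y => f y + g y) x (df + dg).
Proof. exact (is_derive_plus f g x df dg). Qed.

Lemma is_derive_Rminus (f g : R -> R) x df dg : is_derive f x df -> is_derive g x dg ->
  is_derive (fun y => f y - g y) x (df - dg).
Proof. exact (is_derive_minus f g x df dg). Qed.

Lemma is_derive_Rmult (f g : R -> R) x df dg : is_derive f x df -> is_derive g x dg ->
  is_derive (fun y => f y * g y) x (df * g x + f x * dg).
Proof. intros. apply (is_derive_mult f g x df dg); auto. intros; apply Rmult_comm. Qed.

Lemma is_derive_value (f : R -> R) (x l l' : R) : is_derive f x l -> l = l' -> is_derive f x l'.
Proof. now intros ? <-. Qed.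

Lemma is_derive_0_const (f : R -> R) : (forall x, is_derive f x 0) -> forall x y, f x = f y.
Proof.
  intros H x y. destruct (MVT_gen f y x (fun _ => 0)) as [c [_ hc]].
  - intros; apply H.
  - intros z _. apply continuity_pt_filterlim.
    apply (ex_derive_continuous (K := R_AbsRing) (V := R_NormedModule) f z). exists 0; apply H.
  - lra.
Qed.

Lemma is_derive_of_const (f : R -> R) c x l : (forall y, f y = c) -> is_derive f x l -> l = 0.
Proof.
  intros E h. apply is_derive_unique in h. rewrite <- h.
  rewrite (Derive_ext f (fun _ => c)) by exact E. apply Derive_const.
Qed.

Definition vder (f : R -> V3) (x : R) (d : V3) : Prop :=
  is_derive (fun y => v1 (f y)) x (v1 d) /\ is_derive (fun y => v2 (f y)) x (v2 d) /\
  is_derive (fun y => v3 (f y)) x (v3 d).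

Lemma vder_vD f x : vderivable f x -> vder f x (vD f x).
Proof. intros [h1 [h2 h3]]. split; [|split]; apply Derive_correct; auto. Qed.

Lemma vder_ext f g x d : (forall y, f y = g y) -> vder f x d -> vder g x d.
Proof.
  intros E [h1 [h2 h3]].
  split; [|split]; eapply is_derive_ext; eauto; intros; simpl; now rewrite E.
Qed.

Lemma vder_value f x d d' : vder f x d -> d = d' -> vder f x d'.
Proof. now intros ? <-. Qed.

Lemma vder_const (c : V3) x : vder (fun _ => c) x vzero.
Proof. split; [|split]; exact (is_derive_const _ x). Qed.

Lemma vder_add f g x df dg : vder f x df -> vder g x dg ->
  vder (fun y => vadd (f y) (g y)) x (vadd df dg).
Proof. intros [a1 [a2 a3]] [b1 [b2 b3]]. split; [|split]; now apply is_derive_Rplus. Qed.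

Lemma vder_scale h f x dh df : is_derive h x dh -> vder f x df ->
  vder (fun y => vscale (h y) (f y)) x (vadd (vscale dh (f x)) (vscale (h x) df)).
Proof. intros H [a1 [a2 a3]]. split; [|split]; now apply is_derive_Rmult. Qed.

Lemma vder_cscale c f x df : vder f x df -> vder (fun y => vscale c (f y)) x (vscale c df).
Proof.
  intros H. eapply vder_value;
    [apply (vder_scale _ _ _ 0); [exact (is_derive_const c x) | exact H] |].
  vring.
Qed.

Lemma vder_sub f g x df dg : vder f x df -> vder g x dg ->
  vder (fun y => vsub (f y) (g y)) x (vsub df dg).
Proof. intros. apply vder_add; auto. now apply vder_cscale. Qed.

Lemma vder_vdot f g x df dg : vder f x df -> vder g x dg ->
  is_derive (fun y => vdot (f y) (g y)) x (vdot df (g x) + vdot (f x) dg).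
Proof.
  intros [a1 [a2 a3]] [b1 [b2 b3]]. unfold vdot.
  eapply is_derive_value.
  - apply is_derive_Rplus; [apply is_derive_Rplus |];
      [apply (is_derive_Rmult _ _ _ _ _ a1 b1) | apply (is_derive_Rmult _ _ _ _ _ a2 b2)
      | apply (is_derive_Rmult _ _ _ _ _ a3 b3)].
  - ring.
Qed.

Lemma vder_vdot_const f c x df : vder f x df -> is_derive (fun y => vdot (f y) c) x (vdot df c).
Proof.
  intros H. eapply is_derive_value; [apply vder_vdot; [exact H | apply vder_const] |].
  vunfold; ring.
Qed.

Lemma vder_vcross f g x df dg : vder f x df -> vder g x dg ->
  vder (fun y => vcross (f y) (g y)) x (vadd (vcross df (g x)) (vcross (f x) dg)).
Proof.
  intros [a1 [a2 a3]] [b1 [b2 b3]].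
  split; [|split]; (eapply is_derive_value;
    [apply is_derive_Rminus; apply is_derive_Rmult; eauto | simpl; ring]).
Qed.

Lemma vder_frame_map E F f x df : vder f x df ->
  vder (fun y => frame_map E F (f y)) x (frame_map E F df).
Proof.
  intros H. unfold frame_map.
  eapply vder_value.
  - apply vder_add; [apply vder_add |];
      (apply vder_scale; [apply vder_vdot_const, H | apply vder_const]).
  - vring.
Qed.

Lemma vder_comp_scale f (c x : R) df : vder f (c * x) df ->
  vder (fun y => f (c * y)) x (vscale c df).
Proof.
  intros [a1 [a2 a3]].
  assert (Hc : is_derive (fun y : R => c * y) x c).
  { auto_derive; [exact I | ring]. }
  split; [|split]; simpl;
    [ exact (is_derive_comp (fun y => v1 (f y)) (fun y => c * y) x _ _ a1 Hc)
    | exact (is_derive_comp (fun y => v2 (f y)) (fun y => c * y) x _ _ a2 Hc)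
    | exact (is_derive_comp (fun y => v3 (f y)) (fun y => c * y) x _ _ a3 Hc) ].
Qed.

Lemma vder_0_const f : (forall x, vder f x vzero) -> forall x y, f x = f y.
Proof.
  intros H x y. apply V3_ext;
    [ apply (is_derive_0_const (fun y => v1 (f y)))
    | apply (is_derive_0_const (fun y => v2 (f y)))
    | apply (is_derive_0_const (fun y => v3 (f y))) ]; intros z; apply H.
Qed.

Lemma vder_vdot_of_const f g c y df dg : (forall z, vdot (f z) (g z) = c) ->
  vder f y df -> vder g y dg -> vdot df (g y) + vdot (f y) dg = 0.
Proof. intros E hf hg. exact (is_derive_of_const _ c y _ E (vder_vdot _ _ _ _ _ hf hg)). Qed.

(** * Frenet systems *)

Definition frenet_sys (T n b : R -> V3) (a : R) (tau : R -> R) : Prop :=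
  forall y, vder T y (vscale a (n y)) /\
            vder n y (vadd (vscale (-a) (T y)) (vscale (tau y) (b y))) /\
            vder b y (vscale (- tau y) (n y)).

Definition frame_fun (T n b : R -> V3) (x : R) : frame := Frame (T x) (n x) (b x).

Lemma frenet_sys_comp_scale T n b a tau tau' c : c * c = 1 ->
  (forall y, tau' y = c * tau (c * y)) -> frenet_sys T n b a tau ->
  frenet_sys (fun y => vscale c (T (c * y))) (fun y => n (c * y)) (fun y => b (c * y)) a tau'.
Proof.
  intros hc Htau S y. destruct (S (c * y)) as [hT [hn hb]]. rewrite Htau.
  split; [|split].
  - eapply vder_value; [apply vder_cscale, vder_comp_scale, hT |].
    apply V3_ext; vunfold; ring_simplify; replace (c ^ 2) with (c * c) by ring; rewrite hc; ring.
  - eapply vder_value; [apply vder_comp_scale, hn |]. vring.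
  - eapply vder_value; [apply vder_comp_scale, hb |]. vring.
Qed.

(* The components of the difference of two solutions of the same linear
   skew-symmetric system keep a constant Euclidean norm. *)
Lemma frenet_sys_vdot_agree T1 n1 b1 T2 n2 b2 a tau e f :
  frenet_sys T1 n1 b1 a tau -> frenet_sys T2 n2 b2 a tau ->
  vdot (T1 0) e = vdot (T2 0) f -> vdot (n1 0) e = vdot (n2 0) f ->
  vdot (b1 0) e = vdot (b2 0) f ->
  forall x, vdot (T1 x) e = vdot (T2 x) f /\ vdot (n1 x) e = vdot (n2 x) f /\
            vdot (b1 x) e = vdot (b2 x) f.
Proof.
  intros S1 S2 i1 i2 i3.
  set (u1 := fun y => vdot (T1 y) e - vdot (T2 y) f).
  set (u2 := fun y => vdot (n1 y) e - vdot (n2 y) f).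
  set (u3 := fun y => vdot (b1 y) e - vdot (b2 y) f).
  set (energy := fun y => u1 y * u1 y + u2 y * u2 y + u3 y * u3 y).
  assert (Denergy : forall y : R, is_derive energy y 0).
  { intros y. destruct (S1 y) as [p1 [p2 p3]]. destruct (S2 y) as [q1 [q2 q3]].
    assert (D1 : is_derive u1 y (a * u2 y)).
    { eapply is_derive_value; [apply is_derive_Rminus; apply vder_vdot_const; eauto |].
      unfold u2; vunfold; ring. }
    assert (D2 : is_derive u2 y (- a * u1 y + tau y * u3 y)).
    { eapply is_derive_value; [apply is_derive_Rminus; apply vder_vdot_const; eauto |].
      unfold u1, u3; vunfold; ring. }
    assert (D3 : is_derive u3 y (- tau y * u2 y)).
    { eapply is_derive_value; [apply is_derive_Rminus; apply vder_vdot_const; eauto |].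
      unfold u2; vunfold; ring. }
    unfold energy. eapply is_derive_value;
      [apply is_derive_Rplus; [apply is_derive_Rplus |]; apply is_derive_Rmult; eauto |].
    ring. }
  intros x.
  assert (Ex : energy x = 0).
  { rewrite (is_derive_0_const energy Denergy x 0). unfold energy, u1, u2, u3.
    rewrite i1, i2, i3. ring. }
  unfold energy in Ex.
  assert (u1 x = 0 /\ u2 x = 0 /\ u3 x = 0) as [z1 [z2 z3]] by (split; [|split]; nra).
  unfold u1, u2, u3 in *. split; [|split]; lra.
Qed.

Lemma frenet_frame_congruent T1 n1 b1 T2 n2 b2 a tau s :
  frenet_sys T1 n1 b1 a tau -> frenet_sys T2 n2 b2 a tau ->
  oriented_frame (frame_fun T1 n1 b1 0) 1 -> oriented_frame (frame_fun T2 n2 b2 0) s ->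
  let M := frame_map (frame_fun T1 n1 b1 0) (frame_fun T2 n2 b2 0) in
  forall x, T1 x = M (T2 x) /\ n1 x = M (n2 x) /\ b1 x = M (b2 x).
Proof.
  intros S1 S2 G1 G2 M x.
  destruct (oriented_frame_vdot _ _ G1) as [a1 [a2 [a3 [a4 [a5 a6]]]]].
  destruct (oriented_frame_vdot _ _ G2) as [c1 [c2 [c3 [c4 [c5 c6]]]]].
  simpl in *.
  assert (K : forall e f, vdot (T1 0) e = vdot (T2 0) f -> vdot (n1 0) e = vdot (n2 0) f ->
              vdot (b1 0) e = vdot (b2 0) f -> vdot (T1 x) e = vdot (T2 x) f /\
              vdot (n1 x) e = vdot (n2 x) f /\ vdot (b1 x) e = vdot (b2 x) f)
    by (intros; now apply (frenet_sys_vdot_agree _ _ _ _ _ _ a tau)).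
  destruct (K (T1 0) (T2 0)) as [k1 [k2 k3]];
    [ congruence | rewrite (vdot_comm (n1 0)), (vdot_comm (n2 0)); congruence
    | rewrite (vdot_comm (b1 0)), (vdot_comm (b2 0)); congruence |].
  destruct (K (n1 0) (n2 0)) as [l1 [l2 l3]];
    [ congruence | congruence | rewrite (vdot_comm (b1 0)), (vdot_comm (b2 0)); congruence |].
  destruct (K (b1 0) (b2 0)) as [m1 [m2 m3]]; [congruence | congruence | congruence |].
  unfold M, frame_fun, frame_map; simpl. split; [|split].
  - rewrite (oriented_frame_expand _ _ G1 (T1 x)) at 1; simpl. now rewrite k1, l1, m1.
  - rewrite (oriented_frame_expand _ _ G1 (n1 x)) at 1; simpl. now rewrite k2, l2, m2.
  - rewrite (oriented_frame_expand _ _ G1 (b1 x)) at 1; simpl. now rewrite k3, l3, m3.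
Qed.

Definition frenet_frame (chi : R -> R -> V3) (t x : R) : frame :=
  Frame (dx chi t x) (normal chi t x) (binormal chi t x).

Section FrenetOfFlow.
Variables (chi : R -> R -> V3) (a : R).
Hypotheses (ha : 0 < a) (Hflow : binormal_flow chi)
  (Hcurv : forall x, curv chi 1 x = a) (Htors : forall x, tors chi 1 x = x / 2).

Local Notation T := (dx chi 1).
Local Notation Tx := (dxx chi 1).
Local Notation Txx := (dxxx chi 1).

Lemma flow_vder y : vder (chi 1) y (T y) /\ vder T y (Tx y) /\ vder Tx y (Txx y).
Proof.
  destruct (Hflow 1 y Rlt_0_1) as [_ [h1 [h2 [h3 _]]]].
  split; [|split]; now apply vder_vD.
Qed.

Lemma flow_vdot_T y : vdot (T y) (T y) = 1.
Proof. apply vdot_unit, (Hflow 1 y Rlt_0_1). Qed.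

Lemma flow_vdot_Tx y : vdot (Tx y) (Tx y) = a * a.
Proof. rewrite <- vnorm_sqr. fold (curv chi 1 y). now rewrite Hcurv. Qed.

Lemma flow_vdot_T_Tx y : vdot (T y) (Tx y) = 0.
Proof.
  destruct (flow_vder y) as [_ [d1 _]].
  pose proof (vder_vdot_of_const _ _ _ y _ _ flow_vdot_T d1 d1).
  rewrite vdot_comm in H. lra.
Qed.

Lemma flow_vdot_Tx_Txx y : vdot (Tx y) (Txx y) = 0.
Proof.
  destruct (flow_vder y) as [_ [_ d2]].
  pose proof (vder_vdot_of_const _ _ _ y _ _ flow_vdot_Tx d2 d2).
  rewrite vdot_comm in H. lra.
Qed.

Lemma flow_vdot_T_Txx y : vdot (T y) (Txx y) = - (a * a).
Proof.
  destruct (flow_vder y) as [_ [d1 d2]].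
  pose proof (vder_vdot_of_const _ _ _ y _ _ flow_vdot_T_Tx d1 d2).
  rewrite flow_vdot_Tx in H. lra.
Qed.

Lemma flow_normal y : normal chi 1 y = vscale (/ a) (Tx y).
Proof. unfold normal. now rewrite Hcurv. Qed.

Lemma flow_frame_oriented x : oriented_frame (frenet_frame chi 1 x) 1.
Proof.
  unfold frenet_frame, oriented_frame; simpl. rewrite flow_normal.
  split; [split; [|split] | split].
  - apply flow_vdot_T.
  - replace (vdot (vscale (/ a) (Tx x)) (vscale (/ a) (Tx x)))
      with (/ a * / a * vdot (Tx x) (Tx x)) by (vunfold; ring).
    rewrite flow_vdot_Tx. field. lra.
  - replace (vdot (T x) (vscale (/ a) (Tx x))) with (/ a * vdot (T x) (Tx x)) by (vunfold; ring).
    rewrite flow_vdot_T_Tx. ring.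
  - unfold binormal. rewrite flow_normal. vring.
  - ring.
Qed.

Lemma flow_Txx_decomp x :
  vscale (/ a) (Txx x) = vadd (vscale (- a) (T x)) (vscale (x / 2) (binormal chi 1 x)).
Proof.
  pose proof (flow_frame_oriented x) as G.
  rewrite (oriented_frame_expand _ _ G (vscale (/ a) (Txx x))). unfold frenet_frame; simpl.
  assert (e1 : vdot (vscale (/ a) (Txx x)) (T x) = - a).
  { replace (vdot (vscale (/ a) (Txx x)) (T x)) with (/ a * vdot (T x) (Txx x)) by (vunfold; ring).
    rewrite flow_vdot_T_Txx. field. lra. }
  assert (e2 : vdot (vscale (/ a) (Txx x)) (normal chi 1 x) = 0).
  { rewrite flow_normal.
    replace (vdot (vscale (/ a) (Txx x)) (vscale (/ a) (Tx x)))
      with (/ a * / a * vdot (Tx x) (Txx x)) by (vunfold; ring).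
    rewrite flow_vdot_Tx_Txx. ring. }
  assert (e3 : vdot (vscale (/ a) (Txx x)) (binormal chi 1 x) = x / 2).
  { rewrite <- Htors. unfold tors, binormal. rewrite Hcurv, flow_normal.
    vunfold. field. lra. }
  rewrite e1, e2, e3. vring.
Qed.

Lemma flow_frenet_sys : frenet_sys T (normal chi 1) (binormal chi 1) a (fun y => y / 2).
Proof.
  intros y. destruct (flow_vder y) as [_ [d1 d2]].
  pose proof (flow_frame_oriented y) as [[g1 [g2 g3]] _]. simpl in g1, g2, g3.
  assert (ETx : Tx y = vscale a (normal chi 1 y)).
  { rewrite flow_normal. apply V3_ext; vunfold; field; lra. }
  assert (dn : vder (normal chi 1) y (vscale (/ a) (Txx y))).
  { eapply vder_ext; [intros z; symmetry; apply flow_normal |]. now apply vder_cscale. }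
  split; [|split].
  - now rewrite <- ETx.
  - now rewrite <- flow_Txx_decomp.
  - unfold binormal at 1. eapply vder_value; [apply vder_vcross; [exact d1 | exact dn] |].
    rewrite ETx, flow_Txx_decomp. unfold binormal.
    replace (vcross (vscale a (normal chi 1 y)) (normal chi 1 y)) with vzero by vring.
    replace (vcross (T y)
               (vadd (vscale (- a) (T y)) (vscale (y / 2) (vcross (T y) (normal chi 1 y)))))
      with (vscale (y / 2) (vcross (T y) (vcross (T y) (normal chi 1 y)))) by vring.
    rewrite vcross_vcross, g1, g3. vring.
Qed.

End FrenetOfFlow.

(** * Limits *)

Lemma linear_map_decomp M v : linear_map M ->
  M v = vadd (vadd (vscale (v1 v) (M (mkV 1 0 0))) (vscale (v2 v) (M (mkV 0 1 0))))
             (vscale (v3 v) (M (mkV 0 0 1))).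
Proof.
  intros [Hadd Hscale].
  replace v with (vadd (vadd (vscale (v1 v) (mkV 1 0 0)) (vscale (v2 v) (mkV 0 1 0)))
                       (vscale (v3 v) (mkV 0 0 1))) at 1 by vring.
  now rewrite !Hadd, !Hscale.
Qed.

Definition vlim (z : Rbar) (f : R -> V3) (L : V3) : Prop :=
  is_lim (fun y => v1 (f y)) z (v1 L) /\ is_lim (fun y => v2 (f y)) z (v2 L) /\
  is_lim (fun y => v3 (f y)) z (v3 L).

Lemma is_lim_Rmult (f g : R -> R) z (a b : R) :
  is_lim f z a -> is_lim g z b -> is_lim (fun y => f y * g y) z (a * b).
Proof. intros. now apply (is_lim_mult f g z a b). Qed.

Lemma vlim_const z c : vlim z (fun _ => c) c.
Proof. split; [|split]; apply is_lim_const. Qed.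

Lemma vlim_ext z f g L : (forall y, f y = g y) -> vlim z f L -> vlim z g L.
Proof.
  intros E [h1 [h2 h3]].
  split; [|split]; eapply is_lim_ext; eauto; intros; simpl; now rewrite E.
Qed.

Lemma vlim_unique z f L1 L2 : vlim z f L1 -> vlim z f L2 -> L1 = L2.
Proof.
  intros [a1 [a2 a3]] [b1 [b2 b3]].
  apply is_lim_unique in a1, a2, a3, b1, b2, b3. apply V3_ext; congruence.
Qed.

Lemma vlim_vdot z f g L K : vlim z f L -> vlim z g K ->
  is_lim (fun y => vdot (f y) (g y)) z (vdot L K).
Proof.
  intros [a1 [a2 a3]] [b1 [b2 b3]].
  apply is_lim_plus'; [apply is_lim_plus' |]; now apply is_lim_Rmult.
Qed.

Lemma vlim_vcross z f g L K : vlim z f L -> vlim z g K ->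
  vlim z (fun y => vcross (f y) (g y)) (vcross L K).
Proof.
  intros [a1 [a2 a3]] [b1 [b2 b3]].
  split; [|split]; apply is_lim_minus'; now apply is_lim_Rmult.
Qed.

Lemma vlim_add z f g L K : vlim z f L -> vlim z g K ->
  vlim z (fun y => vadd (f y) (g y)) (vadd L K).
Proof. intros [a1 [a2 a3]] [b1 [b2 b3]]. split; [|split]; now apply is_lim_plus'. Qed.

Lemma vlim_scale z (h : R -> R) f (c : R) L : is_lim h z c -> vlim z f L ->
  vlim z (fun y => vscale (h y) (f y)) (vscale c L).
Proof. intros H [a1 [a2 a3]]. split; [|split]; now apply is_lim_Rmult. Qed.

Lemma vlim_linear_map z M f L : linear_map M -> vlim z f L -> vlim z (fun y => M (f y)) (M L).
Proof.
  intros HM [a1 [a2 a3]].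
  rewrite (linear_map_decomp M L HM).
  eapply vlim_ext; [intros y; symmetry; apply (linear_map_decomp M _ HM) |].
  apply vlim_add; [apply vlim_add |]; (apply vlim_scale; [| apply vlim_const]);
    [exact a1 | exact a2 | exact a3].
Qed.

Lemma vcomp_sub_le_vnorm v w : Rabs (v1 v - v1 w) <= vnorm (vsub v w) /\
  Rabs (v2 v - v2 w) <= vnorm (vsub v w) /\ Rabs (v3 v - v3 w) <= vnorm (vsub v w).
Proof.
  pose proof (vcomp_le_vnorm (vsub v w)) as H. set (n := vnorm (vsub v w)) in *.
  unfold vsub, vadd, vopp, vscale in H; simpl in H.
  now replace (v1 v + -1 * v1 w) with (v1 v - v1 w) in H by ring;
    replace (v2 v + -1 * v2 w) with (v2 v - v2 w) in H by ring;
    replace (v3 v + -1 * v3 w) with (v3 v - v3 w) in H by ring.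
Qed.

Lemma vlim_of_vlim_pinfty f L : vlim_pinfty f L -> vlim p_infty f L.
Proof.
  intros H.
  split; [|split]; apply is_lim_spec; intros eps;
    destruct (H eps (cond_pos eps)) as [M HM]; exists M; intros y hy;
    pose proof (vcomp_sub_le_vnorm (f y) L) as [c1 [c2 c3]]; specialize (HM y hy); lra.
Qed.

Lemma vlim_of_vlim_minfty f L : vlim_minfty f L -> vlim m_infty f L.
Proof.
  intros H.
  split; [|split]; apply is_lim_spec; intros eps;
    destruct (H eps (cond_pos eps)) as [M HM]; exists M; intros y hy;
    pose proof (vcomp_sub_le_vnorm (f y) L) as [c1 [c2 c3]]; specialize (HM y hy); lra.
Qed.

Lemma vlim_minfty_opp f L : vlim_minfty f L -> vlim_pinfty (fun y => f (- y)) L.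
Proof.
  intros H eps he. destruct (H eps he) as [M HM]. exists (- M). intros x hx. apply HM; lra.
Qed.

Lemma vlim_pinfty_opp f L : vlim_pinfty f L -> vlim_minfty (fun y => f (- y)) L.
Proof.
  intros H eps he. destruct (H eps he) as [M HM]. exists (- M). intros x hx. apply HM; lra.
Qed.

Definition vlim_right0 (h : R -> V3) (c : V3) : Prop :=
  forall eps, 0 < eps -> exists delta, 0 < delta /\
    forall t, 0 < t < delta -> vnorm (vsub (h t) c) < eps.

Lemma exists_pos_lt3 a b c : 0 < a -> 0 < b -> 0 < c ->
  exists s, 0 < s /\ s < a /\ s < b /\ s < c.
Proof.
  intros. exists (Rmin (Rmin a b) c / 2).
  pose proof (Rmin_l (Rmin a b) c); pose proof (Rmin_r (Rmin a b) c).
  pose proof (Rmin_l a b); pose proof (Rmin_r a b).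
  assert (0 < Rmin (Rmin a b) c) by (repeat apply Rmin_glb_lt; auto).
  lra.
Qed.

Lemma Rmult_lt_of_lt_div s C e : 0 < C -> s < e / C -> s * C < e.
Proof.
  intros hC hs. apply (Rmult_lt_compat_r C) in hs; [| exact hC].
  unfold Rdiv in hs. rewrite Rmult_assoc, Rinv_l, Rmult_1_r in hs; lra.
Qed.

Lemma Rsqr_lt_of_lt_sqrt s d : 0 < s -> 0 < d -> s < sqrt d -> 0 < s * s < d.
Proof.
  intros hs hd hsd. split; [nra |].
  rewrite <- (sqrt_sqrt d) by lra. pose proof (sqrt_pos d). nra.
Qed.

Lemma vnorm_small_eq0 v : (forall eps, 0 < eps -> vnorm v < eps) -> v = vzero.
Proof.
  intros H. apply vdot_self_eq0. rewrite <- vnorm_sqr.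
  destruct (Req_dec (vnorm v) 0) as [h | h]; [rewrite h; ring |].
  pose proof (vnorm_ge0 v). specialize (H (vnorm v)). lra.
Qed.
(* The drift [sqrt t * p] vanishes at [t = 0]. *)
Lemma vlim_right0_isometry h1 h2 c1 c2 (M : V3 -> V3) p :
  (forall u w, M (vsub u w) = vsub (M u) (M w)) -> (forall v, vnorm (M v) = vnorm v) ->
  (forall t, 0 < t -> h1 t = vadd (M (h2 t)) (vscale (sqrt t) p)) ->
  vlim_right0 h1 c1 -> vlim_right0 h2 c2 -> c1 = M c2.
Proof.
  intros Msub Mnorm Hh L1 L2. apply vsub_eq0, vnorm_small_eq0. intros eps he.
  destruct (L1 (eps / 3)) as [d1 [hd1 H1]]; [lra |].
  destruct (L2 (eps / 3)) as [d2 [hd2 H2]]; [lra |].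
  pose proof (vnorm_ge0 p).
  destruct (exists_pos_lt3 (sqrt d1) (sqrt d2) (eps / 3 / (vnorm p + 1)))
    as [s [hs [hs1 [hs2 hs3]]]]; try apply sqrt_lt_R0; try apply Rdiv_lt_0_compat; try lra.
  pose proof (Rsqr_lt_of_lt_sqrt _ _ hs hd1 hs1) as Ht1.
  pose proof (Rsqr_lt_of_lt_sqrt _ _ hs hd2 hs2) as Ht2.
  apply Rmult_lt_of_lt_div in hs3; [| lra].
  specialize (H1 _ Ht1). specialize (H2 _ Ht2).
  replace (vsub c1 (M c2)) with
    (vadd (vadd (vopp (vsub (h1 (s * s)) c1)) (M (vsub (h2 (s * s)) c2))) (vscale s p)).
  2: { rewrite Msub, (Hh _ (proj1 Ht1)), sqrt_square by lra. vring. }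
  eapply Rle_lt_trans; [apply vnorm_triangle |].
  eapply Rle_lt_trans; [apply Rplus_le_compat_r, vnorm_triangle |].
  rewrite vnorm_opp, Mnorm, vnorm_scale, Rabs_pos_eq by lra. nra.
Qed.
Lemma is_lim_of_const (f : R -> R) z (c l : R) : (forall y, f y = c) -> is_lim f z l -> l = c.
Proof.
  intros E H. apply is_lim_unique in H.
  rewrite <- (Lim_ext f (fun _ => c) z E), Lim_const in H. congruence.
Qed.

Lemma derive_lim_minfty_affine_bound (g g' : R -> R) e :
  (forall y, is_derive g y (g' y)) -> is_lim g' m_infty 1 -> 0 < e ->
  exists M K, forall y, y < M -> g y <= K + (1 - e) * y.
Proof.
  intros Dg Lg he.
  apply is_lim_spec in Lg. destruct (Lg (mkposreal e he)) as [M HM]. simpl in HM.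
  exists (M - 1), (g (M - 1) - (1 - e) * (M - 1)). intros y hy.
  destruct (MVT_gen g y (M - 1) g') as [z [hz Ez]].
  - intros; apply Dg.
  - intros w _. apply continuity_pt_filterlim.
    apply (ex_derive_continuous (K := R_AbsRing) (V := R_NormedModule) g w). eexists; apply Dg.
  - rewrite Rmin_left, Rmax_right in hz by lra.
    specialize (HM z ltac:(lra)). apply Rabs_def2 in HM.
    assert (g' z * (M - 1 - y) >= (1 - e) * (M - 1 - y)) by (apply Rle_ge, Rmult_le_compat_r; lra).
    lra.
Qed.

(* If [g' -> 1] at [-oo] then [g y ~ y], so the blow-up [sqrt t * g (-1 / sqrt t)]
   tends to [-1]; only the upper bound is needed. *)
Lemma blowup_limit_le (h g g' : R -> R) l :
  (forall y, is_derive g y (g' y)) -> is_lim g' m_infty 1 ->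
  (forall t, 0 < t -> h t = sqrt t * g (-1 / sqrt t)) ->
  (forall eps, 0 < eps -> exists delta, 0 < delta /\
     forall t, 0 < t < delta -> Rabs (h t - l) < eps) ->
  l <= -1.
Proof.
  intros Dg Lg Hh Lh.
  enough (Hlt : forall e, 0 < e -> l < -1 + 3 * e).
  { destruct (Rle_or_lt l (-1)) as [H | H]; [exact H |].
    specialize (Hlt ((l + 1) / 3)). lra. }
  intros e he.
  destruct (derive_lim_minfty_affine_bound g g' e Dg Lg he) as [M [K HK]].
  destruct (Lh e he) as [d [hd Hd]].
  pose proof (Rabs_pos M); pose proof (Rabs_pos K).
  destruct (exists_pos_lt3 (sqrt d) (1 / (Rabs M + 1)) (e / (Rabs K + 1)))
    as [s [hs [hs1 [hs2 hs3]]]]; try apply sqrt_lt_R0; try apply Rdiv_lt_0_compat; try lra.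
  pose proof (Rsqr_lt_of_lt_sqrt _ _ hs hd hs1) as Ht.
  apply Rmult_lt_of_lt_div in hs2, hs3; try lra.
  assert (HyM : -1 / s < M).
  { pose proof (Rle_abs (- M)). rewrite Rabs_Ropp in *.
    apply Rmult_lt_reg_l with s; [exact hs |]. field_simplify; nra. }
  assert (Hbound : h (s * s) <= s * K - (1 - e)).
  { rewrite (Hh _ (proj1 Ht)), sqrt_square by lra.
    apply Rle_trans with (s * (K + (1 - e) * (-1 / s))); [apply Rmult_le_compat_l; [lra | auto] |].
    right. field. lra. }
  specialize (Hd _ Ht). apply Rabs_def2 in Hd. pose proof (Rle_abs K). nra.
Qed.
Lemma limit_frame_minfty (c : R -> R -> V3) (T Re Im : R -> V3) (A ReB ImB : V3) :
  (forall t, 0 < t -> c t (-1) = vscale (sqrt t) (c 1 (-1 / sqrt t))) ->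
  vlim_right0 (fun t => c t (-1)) (vopp A) ->
  (forall y, vder (c 1) y (T y)) ->
  (forall y, orthonormal (Re y) (Im y) /\ vcross (Re y) (Im y) = T y) ->
  vlim m_infty Re ReB -> vlim m_infty Im ImB -> vdot A A = 1 ->
  orthonormal ReB ImB /\ vcross ReB ImB = A.
Proof.
  intros Hscal Hinit Hder Hframe LRe LIm hA.
  assert (HON : orthonormal ReB ImB).
  { split; [|split];
      [ apply (is_lim_of_const (fun y => vdot (Re y) (Re y)) m_infty)
      | apply (is_lim_of_const (fun y => vdot (Im y) (Im y)) m_infty)
      | apply (is_lim_of_const (fun y => vdot (Re y) (Im y)) m_infty) ];
      try (intros; apply Hframe); now apply vlim_vdot. }
  split; [exact HON |].
  set (A' := vcross ReB ImB).
  assert (hA' : vdot A' A' = 1).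
  { unfold A'. destruct HON as [o1 [o2 o3]]. rewrite vdot_vcross_self, o1, o2, o3. ring. }
  assert (LTA : is_lim (fun y => vdot (T y) A') m_infty 1).
  { rewrite <- hA'. apply vlim_vdot; [| apply vlim_const].
    eapply vlim_ext; [intros y; apply Hframe |]. now apply vlim_vcross. }
  assert (Hle : vdot (vopp A) A' <= -1).
  { apply (blowup_limit_le (fun t => vdot (c t (-1)) A') (fun y => vdot (c 1 y) A')
             (fun y => vdot (T y) A')); auto.
    - intros y. now apply vder_vdot_const.
    - intros t ht. rewrite (Hscal t ht). vunfold; ring.
    - intros eps he. destruct (Hinit eps he) as [d [hd Hd]]. exists d; split; [exact hd |].
      intros t ht. specialize (Hd t ht).
      replace (vdot (c t (-1)) A' - vdot (vopp A) A') with (vdot (vsub (c t (-1)) (vopp A)) A')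
        by (vunfold; ring).
      eapply Rle_lt_trans; [apply vdot_le_vnorm |].
      unfold vnorm at 2. rewrite hA', sqrt_1, Rmult_1_r. exact Hd. }
  symmetry. apply vsub_eq0, vdot_self_eq0.
  assert (E : vdot (vsub A A') (vsub A A') = vdot A A - 2 * vdot A A' + vdot A' A')
    by (vunfold; ring).
  replace (vdot (vopp A) A') with (- vdot A A') in Hle by (vunfold; ring).
  pose proof (vdot_ge0 (vsub A A')). lra.
Qed.

(** * The self-similar profile *)

Record selfsimilar_profile (Ap Am : V3) (a : R) (chi : R -> R -> V3) : Prop := {
  profile_frenet : frenet_sys (dx chi 1) (normal chi 1) (binormal chi 1) a (fun y => y / 2);
  profile_frame : forall x, oriented_frame (frenet_frame chi 1 x) 1;
  profile_vder : forall y, vder (chi 1) y (dx chi 1 y);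
  profile_scaling : forall t x, 0 < t -> chi t x = vscale (sqrt t) (chi 1 (x / sqrt t));
  profile_lim0 : forall x, vlim_right0 (fun t => chi t x) (chi 0 x);
  profile_init_pos : forall x, 0 <= x -> chi 0 x = vscale x Ap;
  profile_init_neg : forall x, x <= 0 -> chi 0 x = vscale x Am;
  profile_phase : forall x, phase chi a 1 x = x * x / 4 + a ^ 2 * ln (Rabs x) }.

Lemma RInt_half_id x : RInt (fun s => s / 2) 0 x = x * x / 4.
Proof.
  assert (H : is_RInt (fun s => s / 2) 0 x
                (minus ((fun s => s * s / 4) x) ((fun s => s * s / 4) 0))).
  { apply (is_RInt_derive (V := R_CompleteNormedModule) (fun s => s * s / 4) (fun s => s / 2) 0 x).
    - intros y _. auto_derive; [exact I | field].
    - intros y _. apply (ex_derive_continuous (K := R_AbsRing) (V := R_NormedModule)).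
      auto_derive. exact I. }
  apply (is_RInt_unique (V := R_CompleteNormedModule)) in H. rewrite H.
  unfold minus, plus, opp; simpl. field.
Qed.

Lemma selfsimilar_solution_profile Ap Am a chi : 0 < a ->
  selfsimilar_solution Ap Am a chi -> selfsimilar_profile Ap Am a chi.
Proof.
  intros ha [Hflow [[G HG] [Hpos [Hneg [Hlim [Hcurv Htors]]]]]].
  assert (Hc1 : forall x, curv chi 1 x = a) by (intros; rewrite Hcurv, sqrt_1 by lra; field).
  assert (Ht1 : forall x, tors chi 1 x = x / 2) by (intros; rewrite Htors by lra; field).
  split; auto.
  - now apply (flow_frenet_sys chi a).
  - now apply (flow_frame_oriented chi a).
  - intros y. exact (proj1 (flow_vder chi Hflow y)).
  - intros t x ht. rewrite (HG t x ht), (HG 1 (x / sqrt t) Rlt_0_1), sqrt_1.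
    unfold Rdiv at 2. rewrite Rinv_1, Rmult_1_r, vscale1. reflexivity.
  - intros x. unfold phase. rewrite sqrt_1, ln_1, (RInt_ext _ (fun s => s / 2)), RInt_half_id.
    + ring.
    + intros; apply Ht1.
Qed.

Lemma orthonormal_rotate n b c sn : orthonormal n b -> c * c + sn * sn = 1 ->
  orthonormal (vsub (vscale c n) (vscale sn b)) (vadd (vscale sn n) (vscale c b)) /\
  vcross (vsub (vscale c n) (vscale sn b)) (vadd (vscale sn n) (vscale c b)) = vcross n b.
Proof.
  intros [hn [hb hnb]] hc.
  assert (E : forall p q p' q',
    vdot (vadd (vscale p n) (vscale q b)) (vadd (vscale p' n) (vscale q' b)) = p * p' + q * q').
  { intros. transitivity (p * p' * vdot n n + (p * q' + q * p') * vdot n b + q * q' * vdot b b).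
    - vunfold; ring.
    - rewrite hn, hb, hnb. ring. }
  replace (vsub (vscale c n) (vscale sn b)) with (vadd (vscale c n) (vscale (- sn) b)) by vring.
  split; [split; [|split] |]; rewrite ?E; try lra.
  replace (vcross (vadd (vscale c n) (vscale (- sn) b)) (vadd (vscale sn n) (vscale c b)))
    with (vscale (c * c + sn * sn) (vcross n b)) by vring.
  rewrite hc. apply vscale1.
Qed.

Lemma rotated_pair_frame F P : oriented_frame F 1 ->
  orthonormal (vsub (vscale (cos P) (fN F)) (vscale (sin P) (fB F)))
              (vadd (vscale (sin P) (fN F)) (vscale (cos P) (fB F))) /\
  vcross (vsub (vscale (cos P) (fN F)) (vscale (sin P) (fB F)))
         (vadd (vscale (sin P) (fN F)) (vscale (cos P) (fB F))) = fT F.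
Proof.
  intros G. destruct (oriented_frame_vdot _ _ G) as [_ [a2 [a3 [_ [_ a6]]]]].
  destruct (oriented_frame_vcross _ _ G) as [_ [c2 _]].
  rewrite <- (vscale1 (fT F)), <- c2. apply orthonormal_rotate; [now split; [|split] |].
  pose proof (sin2_cos2 P) as sc. unfold Rsqr in sc. lra.
Qed.

Lemma modframe_frame chi a x : oriented_frame (frenet_frame chi 1 x) 1 ->
  orthonormal (cre (modframe chi a 1 x)) (cim (modframe chi a 1 x)) /\
  vcross (cre (modframe chi a 1 x)) (cim (modframe chi a 1 x)) = dx chi 1 x.
Proof. apply rotated_pair_frame. Qed.

Lemma profile_Bminus Ap Am a chi Bm : selfsimilar_profile Ap Am a chi -> vdot Am Am = 1 ->
  is_Bminus chi a Bm -> orthonormal (cre Bm) (cim Bm) /\ vcross (cre Bm) (cim Bm) = Am.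
Proof.
  intros P hA HB. destruct (HB 1 Rlt_0_1) as [LRe LIm].
  apply (limit_frame_minfty chi (dx chi 1) (fun y => cre (modframe chi a 1 y))
           (fun y => cim (modframe chi a 1 y))); [| | | | | | exact hA].
  - intros t ht. apply (profile_scaling _ _ _ _ P t (-1) ht).
  - replace (vopp Am) with (chi 0 (-1)) by (rewrite (profile_init_neg _ _ _ _ P) by lra; vring).
    apply (profile_lim0 _ _ _ _ P).
  - apply (profile_vder _ _ _ _ P).
  - intros y. apply modframe_frame, (profile_frame _ _ _ _ P).
  - now apply vlim_of_vlim_minfty.
  - now apply vlim_of_vlim_minfty.
Qed.

(* [B+] is read off the reversed curve [x |-> - chi t (- x)], whose end at [-oo]
   is the end of [chi] at [+oo]. *)
Lemma profile_Bplus Ap Am a chi Bp : selfsimilar_profile Ap Am a chi -> vdot Ap Ap = 1 ->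
  is_Bplus chi a Bp -> orthonormal (cre Bp) (cim Bp) /\ vcross (cre Bp) (cim Bp) = Ap.
Proof.
  intros P hA HB. destruct (HB 1 Rlt_0_1) as [LRe LIm].
  apply (limit_frame_minfty (fun t x => vopp (chi t (- x))) (fun y => dx chi 1 (- y))
           (fun y => cre (modframe chi a 1 (- y))) (fun y => cim (modframe chi a 1 (- y))));
    [| | | | | | exact hA].
  - intros t ht. simpl. rewrite (profile_scaling _ _ _ _ P t (- -1) ht).
    replace (- (-1 / sqrt t)) with (- -1 / sqrt t) by (unfold Rdiv; ring). vring.
  - intros eps he. destruct (profile_lim0 _ _ _ _ P 1 eps he) as [d [hd Hd]].
    exists d; split; [exact hd |]. intros t ht.
    rewrite (profile_init_pos _ _ _ _ P) in Hd by lra.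
    replace (- -1) with 1 by ring.
    replace (vsub (vopp (chi t 1)) (vopp Ap)) with (vopp (vsub (chi t 1) (vscale 1 Ap))) by vring.
    rewrite vnorm_opp. exact (Hd t ht).
  - intros y. simpl. eapply vder_value.
    + apply (vder_cscale (-1)), (vder_ext (fun z => chi 1 (-1 * z))); [intros z; f_equal; ring |].
      apply vder_comp_scale. replace (-1 * y) with (- y) by ring. apply (profile_vder _ _ _ _ P).
    + vring.
  - intros y. apply modframe_frame, (profile_frame _ _ _ _ P).
  - apply vlim_of_vlim_minfty, (vlim_pinfty_opp (fun x => cre (modframe chi a 1 x))), LRe.
  - apply vlim_of_vlim_minfty, (vlim_pinfty_opp (fun x => cim (modframe chi a 1 x))), LIm.
Qed.

(** * Congruent profiles *)

Section Congruence.
Variables (Ap Am Ap' Am' : V3) (a s : R) (chi chis : R -> R -> V3).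
Hypotheses (Hchi : selfsimilar_profile Ap Am a chi) (Hchis : selfsimilar_profile Ap' Am' a chis)
  (hs : s * s = 1).

Let T2 y := vscale s (dx chi 1 (s * y)).
Let n2 y := normal chi 1 (s * y).
Let b2 y := binormal chi 1 (s * y).

Lemma reparam_frame_oriented : oriented_frame (frame_fun T2 n2 b2 0) s.
Proof. exact (oriented_frame_scale_T _ s (profile_frame _ _ _ _ Hchi (s * 0)) hs). Qed.

Lemma reparam_frenet_sys : frenet_sys T2 n2 b2 a (fun y => y / 2).
Proof.
  apply (frenet_sys_comp_scale _ _ _ a (fun y => y / 2));
    [exact hs | | apply (profile_frenet _ _ _ _ Hchi)].
  intros y. replace (s * (s * y / 2)) with (s * s * y / 2) by (unfold Rdiv; ring).
  rewrite hs. field.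
Qed.

Let M := frame_map (frenet_frame chis 1 0) (frame_fun T2 n2 b2 0).

Lemma reparam_frame_congruent x :
  dx chis 1 x = M (T2 x) /\ normal chis 1 x = M (n2 x) /\ binormal chis 1 x = M (b2 x).
Proof.
  exact (frenet_frame_congruent _ _ _ _ _ _ a (fun y => y / 2) s (profile_frenet _ _ _ _ Hchis)
           reparam_frenet_sys (profile_frame _ _ _ _ Hchis 0) reparam_frame_oriented x).
Qed.

Lemma reparam_curve_congruent y :
  chis 1 y = vadd (M (chi 1 (s * y))) (vsub (chis 1 0) (M (chi 1 (s * 0)))).
Proof.
  assert (Hconst : forall z, vder (fun z => vsub (chis 1 z) (M (chi 1 (s * z)))) z vzero).
  { intros z. eapply vder_value.
    - apply vder_sub; [apply (profile_vder _ _ _ _ Hchis) |].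
      apply vder_frame_map, vder_comp_scale, (profile_vder _ _ _ _ Hchi).
    - rewrite (proj1 (reparam_frame_congruent z)). unfold M, T2. vring. }
  rewrite <- (vder_0_const _ Hconst y 0). vring.
Qed.

Lemma reparam_init_congruent x : chis 0 x = M (chi 0 (s * x)).
Proof.
  apply (vlim_right0_isometry (fun t => chis t x) (fun t => chi t (s * x)) _ _ M
           (vsub (chis 1 0) (M (chi 1 (s * 0))))).
  - apply frame_map_sub.
  - apply (frame_map_vnorm _ _ s);
      [apply (profile_frame _ _ _ _ Hchis 0) | apply reparam_frame_oriented].
  - intros t ht. rewrite (profile_scaling _ _ _ _ Hchis t x ht), reparam_curve_congruent.
    rewrite (profile_scaling _ _ _ _ Hchi t (s * x) ht). unfold M. rewrite frame_map_scale.
    replace (s * (x / sqrt t)) with (s * x / sqrt t) by (unfold Rdiv; ring). vring.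
  - apply (profile_lim0 _ _ _ _ Hchis).
  - apply (profile_lim0 _ _ _ _ Hchi).
Qed.

Lemma reparam_modframe_congruent x : modframe chis a 1 x = capply M (modframe chi a 1 (s * x)).
Proof.
  assert (Habs : Rabs s = 1).
  { assert (Rabs s * Rabs s = 1) by (rewrite <- Rabs_mult, hs; apply Rabs_R1).
    pose proof (Rabs_pos s). nra. }
  unfold modframe; cbv zeta.
  rewrite (profile_phase _ _ _ _ Hchis), (profile_phase _ _ _ _ Hchi), Rabs_mult, Habs, Rmult_1_l.
  replace (s * x * (s * x)) with (s * s * (x * x)) by ring. rewrite hs, Rmult_1_l.
  destruct (reparam_frame_congruent x) as [_ [-> ->]].
  unfold capply, M, n2, b2; simpl. now rewrite frame_map_sub, frame_map_add, !frame_map_scale.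
Qed.

Lemma profiles_congruent : exists M : V3 -> V3,
  linear_map M /\ (forall u w, vcross (M u) (M w) = vscale s (M (vcross u w))) /\
  (forall x, chis 0 x = M (chi 0 (s * x))) /\
  (forall x, modframe chis a 1 x = capply M (modframe chi a 1 (s * x))).
Proof.
  exists M. split; [|split; [|split]].
  - apply linear_map_frame_map.
  - intros u w. apply frame_map_vcross;
      [apply (profile_frame _ _ _ _ Hchis 0) | apply reparam_frame_oriented].
  - apply reparam_init_congruent.
  - apply reparam_modframe_congruent.
Qed.

End Congruence.

(** * The rotation [rho] and the reflection across the plane of the corner *)

Lemma rot_PI k v : rot k PI v = vadd (vopp v) (vscale (2 * vdot k v) k).
Proof. unfold rot. rewrite cos_PI, sin_PI. vring. Qed.

Lemma linear_map_rot k phi : linear_map (rot k phi).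
Proof. split; intros; unfold rot; vring. Qed.

Lemma vnorm_pos v : v <> vzero -> 0 < vnorm v.
Proof. intros H. apply sqrt_lt_R0, vdot_self_pos, H. Qed.

Lemma vcross_neq0_neq u w : vcross u w <> vzero -> u <> w.
Proof. intros H ->. apply H. vring. Qed.

Lemma linear_map_rho Ap Am : linear_map (rho Ap Am).
Proof. apply linear_map_rot. Qed.

Section Rho.
Variables Ap Am : V3.
Hypotheses (hAp : vdot Ap Ap = 1) (hAm : vdot Am Am = 1) (hne : Ap <> Am).

Let d := vsub Ap Am.

Lemma rho_formula v : rho Ap Am v = vadd (vopp v) (vscale (2 * vdot d v / vdot d d) d).
Proof.
  assert (hd : 0 < vnorm d) by (apply vnorm_pos; intros h; now apply hne, vsub_eq0).
  unfold rho. fold d. rewrite rot_PI, <- vnorm_sqr. apply V3_ext; vunfold; field; lra.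
Qed.

Lemma rho_corners : rho Ap Am Ap = vopp Am /\ rho Ap Am Am = vopp Ap.
Proof.
  assert (hdd : 0 < vdot d d) by (apply vdot_self_pos; intros h; now apply hne, vsub_eq0).
  assert (Edd : vdot d d = 2 - 2 * vdot Ap Am).
  { replace (vdot d d) with (vdot Ap Ap - 2 * vdot Ap Am + vdot Am Am) by (unfold d; vunfold; ring).
    lra. }
  rewrite !rho_formula. split.
  - replace (vdot d Ap) with (vdot Ap Ap - vdot Ap Am) by (unfold d; vunfold; ring).
    rewrite Edd, hAp. replace (2 * (1 - vdot Ap Am) / (2 - 2 * vdot Ap Am)) with 1 by (field; lra).
    unfold d; vring.
  - replace (vdot d Am) with (vdot Ap Am - vdot Am Am) by (unfold d; vunfold; ring).
    rewrite Edd, hAm.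
    replace (2 * (vdot Ap Am - 1) / (2 - 2 * vdot Ap Am)) with (-1) by (field; lra).
    unfold d; vring.
Qed.

Lemma rho_vcross : rho Ap Am (vcross Ap Am) = vopp (vcross Ap Am).
Proof.
  rewrite rho_formula. replace (vdot d (vcross Ap Am)) with 0 by (unfold d; vunfold; ring).
  unfold Rdiv. rewrite Rmult_0_r, Rmult_0_l. vring.
Qed.

Lemma swap_corners_eq_rho M : linear_map M ->
  (forall u w, vcross (M u) (M w) = vscale 1 (M (vcross u w))) ->
  vcross Ap Am <> vzero -> M Ap = vopp Am -> M Am = vopp Ap -> forall v, M v = rho Ap Am v.
Proof.
  intros HM Mcross hN MAp MAm. destruct rho_corners as [rAp rAm].
  apply (linear_ext_basis _ _ Ap Am HM (linear_map_rho Ap Am) hN).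
  - now rewrite MAp, rAp.
  - now rewrite MAm, rAm.
  - rewrite rho_vcross, <- (vscale1 (M (vcross Ap Am))), <- Mcross, MAp, MAm. vring.
Qed.

End Rho.

Definition plane_reflection (N v : V3) : V3 := vsub v (vscale (2 * vdot v N / vdot N N) N).

Lemma linear_map_plane_reflection N : linear_map (plane_reflection N).
Proof. split; intros; unfold plane_reflection; vring. Qed.

Lemma fix_corners_eq_reflection Ap Am M : linear_map M ->
  (forall u w, vcross (M u) (M w) = vscale (-1) (M (vcross u w))) ->
  vcross Ap Am <> vzero -> M Ap = Ap -> M Am = Am ->
  forall v, M v = plane_reflection (vcross Ap Am) v.
Proof.
  intros HM Mcross hN MAp MAm. pose proof (vdot_self_pos _ hN) as hnn.
  apply (linear_ext_basis _ _ Ap Am HM (linear_map_plane_reflection _) hN); unfold plane_reflection.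
  - rewrite MAp. replace (vdot Ap (vcross Ap Am)) with 0 by (vunfold; ring). vring.
  - rewrite MAm. replace (vdot Am (vcross Ap Am)) with 0 by (vunfold; ring). vring.
  - assert (MN : M (vcross Ap Am) = vopp (vcross Ap Am)).
    { apply (vscale_inj (-1)); [lra |]. rewrite <- Mcross, MAp, MAm. vring. }
    rewrite MN. apply V3_ext; vunfold; field; vunfold; lra.
Qed.

Lemma capply_ext f g B : (forall v, f v = g v) -> capply f B = capply g B.
Proof. intros H. unfold capply. now rewrite !H. Qed.

Section ReversedProfile.
Variables (Ap Am : V3) (a : R) (chi chis : R -> R -> V3).
Hypotheses (hAp : vdot Ap Ap = 1) (hAm : vdot Am Am = 1) (hN : vcross Ap Am <> vzero)
  (Hchi : selfsimilar_profile Ap Am a chi)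
  (Hchis : selfsimilar_profile (vopp Am) (vopp Ap) a chis).

Lemma reversed_profile_rho x : modframe chis a 1 x = capply (rho Ap Am) (modframe chi a 1 x).
Proof.
  destruct (profiles_congruent _ _ _ _ a 1 chi chis Hchi Hchis ltac:(ring))
    as [M [HM [Mcross [Minit Mframe]]]].
  assert (MAp : M Ap = vopp Am).
  { pose proof (Minit 1) as h. rewrite Rmult_1_l, (profile_init_pos _ _ _ _ Hchis),
      (profile_init_pos _ _ _ _ Hchi), !vscale1 in h by lra. now symmetry. }
  assert (MAm : M Am = vopp Ap).
  { pose proof (Minit (-1)) as h. rewrite Rmult_1_l, (profile_init_neg _ _ _ _ Hchis),
      (profile_init_neg _ _ _ _ Hchi), (proj2 HM) in h by lra.
    symmetry. now apply (vscale_inj (-1)); [lra |]. }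
  rewrite Mframe, Rmult_1_l. apply capply_ext.
  now apply (swap_corners_eq_rho _ _ hAp hAm (vcross_neq0_neq _ _ hN)).
Qed.

Lemma reversed_profile_reflection x :
  modframe chis a 1 x = capply (plane_reflection (vcross Ap Am)) (modframe chi a 1 (- x)).
Proof.
  destruct (profiles_congruent _ _ _ _ a (-1) chi chis Hchi Hchis ltac:(ring))
    as [M [HM [Mcross [Minit Mframe]]]].
  assert (MAp : M Ap = Ap).
  { pose proof (Minit (-1)) as h. replace (-1 * -1) with 1 in h by ring.
    rewrite (profile_init_neg _ _ _ _ Hchis), (profile_init_pos _ _ _ _ Hchi), vscale1 in h by lra.
    rewrite <- h. vring. }
  assert (MAm : M Am = Am).
  { pose proof (Minit 1) as h. rewrite Rmult_1_r, (profile_init_pos _ _ _ _ Hchis),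
      (profile_init_neg _ _ _ _ Hchi), (proj2 HM), vscale1 in h by lra.
    apply (vscale_inj (-1)); [lra |]. rewrite <- h. vring. }
  rewrite Mframe. replace (-1 * x) with (- x) by ring. apply capply_ext.
  now apply fix_corners_eq_reflection.
Qed.

End ReversedProfile.

Definition cvlim (z : Rbar) (F : R -> CV3) (B : CV3) : Prop :=
  vlim z (fun x => cre (F x)) (cre B) /\ vlim z (fun x => cim (F x)) (cim B).

Lemma is_Bplus_cvlim chi a B : is_Bplus chi a B -> cvlim p_infty (modframe chi a 1) B.
Proof. intros H. destruct (H 1 Rlt_0_1). split; now apply vlim_of_vlim_pinfty. Qed.

Lemma is_Bminus_cvlim chi a B : is_Bminus chi a B -> cvlim m_infty (modframe chi a 1) B.
Proof. intros H. destruct (H 1 Rlt_0_1). split; now apply vlim_of_vlim_minfty. Qed.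

Lemma is_Bplus_cvlim_opp chi a B : is_Bplus chi a B ->
  cvlim m_infty (fun x => modframe chi a 1 (- x)) B.
Proof.
  intros H. destruct (H 1 Rlt_0_1) as [h1 h2].
  split; apply vlim_of_vlim_minfty;
    [ apply (vlim_pinfty_opp (fun x => cre (modframe chi a 1 x)))
    | apply (vlim_pinfty_opp (fun x => cim (modframe chi a 1 x))) ]; assumption.
Qed.

Lemma is_Bminus_cvlim_opp chi a B : is_Bminus chi a B ->
  cvlim p_infty (fun x => modframe chi a 1 (- x)) B.
Proof.
  intros H. destruct (H 1 Rlt_0_1) as [h1 h2].
  split; apply vlim_of_vlim_pinfty;
    [ apply (vlim_minfty_opp (fun x => cre (modframe chi a 1 x)))
    | apply (vlim_minfty_opp (fun x => cim (modframe chi a 1 x))) ]; assumption.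
Qed.

Lemma cvlim_capply_unique z F G M B B' : linear_map M -> (forall x, F x = capply M (G x)) ->
  cvlim z F B -> cvlim z G B' -> B = capply M B'.
Proof.
  intros HM E [LF1 LF2] [LG1 LG2]. destruct B as [re im]. unfold capply. f_equal.
  - apply (vlim_unique z (fun x => cre (F x))); [exact LF1 |].
    eapply vlim_ext; [intros x; rewrite E; reflexivity |]. now apply vlim_linear_map.
  - apply (vlim_unique z (fun x => cim (F x))); [exact LF2 |].
    eapply vlim_ext; [intros x; rewrite E; reflexivity |]. now apply vlim_linear_map.
Qed.

Lemma double_angle_choice (al be nn : R) : 0 < nn -> nn = al * al + be * be ->
  let th := asin (Rabs al / sqrt nn) in
  exists phi, (phi = 2 * th \/ phi = - (2 * th)) /\
    cos phi = 1 - 2 * al * al / nn /\ sin phi = - 2 * al * be / nn.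
Proof.
  intros hn hnn th.
  pose proof (sqrt_lt_R0 nn hn) as hq. pose proof (sqrt_sqrt nn (Rlt_le _ _ hn)) as hqq.
  set (q := sqrt nn) in *.
  assert (hx : Rabs al / q * (Rabs al / q) = al * al / nn).
  { rewrite <- hqq.
    replace (Rabs al / q * (Rabs al / q)) with (Rabs al * Rabs al / (q * q)) by (field; lra).
    rewrite <- Rabs_mult, Rabs_right by nra. reflexivity. }
  assert (hb : -1 <= Rabs al / q <= 1).
  { assert (0 <= Rabs al / q) by (apply Rdiv_le_0_compat; [apply Rabs_pos | lra]).
    assert (al * al / nn <= 1) by (apply Rmult_le_reg_r with nn; auto; field_simplify; nra).
    nra. }
  assert (sth : sin th = Rabs al / q) by (apply sin_asin; auto).
  assert (cth : cos th = Rabs be / q).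
  { unfold th. rewrite cos_asin by auto. unfold Rsqr.
    replace (1 - Rabs al / q * (Rabs al / q)) with (Rsqr (Rabs be / q)).
    - apply sqrt_Rsqr. apply Rdiv_le_0_compat; [apply Rabs_pos | lra].
    - rewrite hx. unfold Rsqr.
      replace (Rabs be / q * (Rabs be / q)) with (Rabs be * Rabs be / (q * q)) by (field; lra).
      rewrite <- Rabs_mult, Rabs_right, hqq by nra. field_simplify; nra. }
  assert (c2 : cos (2 * th) = 1 - 2 * al * al / nn).
  { rewrite cos_2a_sin, sth, Rmult_assoc, hx. field; lra. }
  assert (s2 : sin (2 * th) = 2 * (Rabs al * Rabs be) / nn).
  { rewrite sin_2a, sth, cth, <- hqq. field. lra. }
  rewrite <- Rabs_mult in s2.
  destruct (Rle_or_lt (al * be) 0) as [h | h].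
  - exists (2 * th). split; [now left |]. split; [exact c2 |].
    rewrite s2, Rabs_left1 by auto. field; lra.
  - exists (- (2 * th)). split; [now right |]. rewrite cos_neg, sin_neg. split; [exact c2 |].
    rewrite s2, Rabs_right by lra. field; lra.
Qed.

Lemma rot_axis_opp k phi : vdot k k = 1 -> rot k phi (vopp k) = vopp k.
Proof.
  intros hk. unfold rot.
  replace (vdot k (vopp k)) with (- vdot k k) by (vunfold; ring). rewrite hk.
  replace (vcross k (vopp k)) with vzero by vring. vring.
Qed.

(* Conjugating [B] reflects its plane across [Re B]; composing with the
   reflection across [Pi] gives the rotation of twice the angle between
   [Re B] and [Pi]. *)
Lemma plane_reflection_rotated_conj (A Ap Am : V3) (B : CV3) :
  vdot A A = 1 -> orthonormal (cre B) (cim B) -> vcross (cre B) (cim B) = A ->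
  vcross Ap Am <> vzero -> vdot A (vcross Ap Am) = 0 ->
  exists Rf, rotation_2theta A Ap Am B Rf /\ Rf (vopp A) = vopp A /\
     capply (plane_reflection (vcross Ap Am)) B = capply Rf (cconj B).
Proof.
  destruct B as [w im]; cbn [cre cim].
  intros hA hON hC hN hAN.
  assert (G : oriented_frame (Frame w im A) 1)
    by (split; [exact hON | cbn [fT fN fB]; split; [rewrite hC; vring | ring]]).
  destruct (oriented_frame_vdot _ _ G) as [ww [ii [_ [wi [wA iA]]]]].
  destruct (oriented_frame_vcross _ _ G) as [_ [imA Aw]]. cbn [fT fN fB] in *.
  set (N := vcross Ap Am) in *.
  assert (EN : N = vadd (vscale (vdot N w) w) (vscale (vdot N im) im)).
  { rewrite (oriented_frame_expand _ _ G N) at 1; cbn [fT fN fB].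
    rewrite (vdot_comm N A), hAN. vring. }
  set (al := vdot N w) in *. set (be := vdot N im) in *.
  assert (hnn : vdot N N = al * al + be * be).
  { rewrite EN at 1 2.
    replace (vdot (vadd (vscale al w) (vscale be im)) (vadd (vscale al w) (vscale be im)))
      with (al * al * vdot w w + 2 * al * be * vdot w im + be * be * vdot im im) by (vunfold; ring).
    rewrite ww, ii, wi. ring. }
  pose proof (vdot_self_pos _ hN) as hn.
  set (nn := vdot N N) in *.
  destruct (double_angle_choice al be nn hn hnn) as [phi [hphi [cp sp]]].
  exists (rot A phi). split; [|split].
  - exists phi. split; [| reflexivity].
    assert (nw : vnorm w = 1) by (unfold vnorm; rewrite ww; apply sqrt_1).
    unfold angle_vec_plane; cbn [cre]. fold N. rewrite nw, Rmult_1_l, (vdot_comm w N). exact hphi.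
  - now apply rot_axis_opp.
  - unfold capply, cconj, plane_reflection, rot; cbn [cre cim]. fold nn. f_equal.
    + rewrite (vdot_comm w N), (vdot_comm A w), wA, Aw, cp, sp. fold al. rewrite EN.
      apply V3_ext; vunfold; field; lra.
    + replace (vdot A (vopp im)) with (- vdot im A) by (vunfold; ring).
      replace (vcross A (vopp im)) with (vcross im A) by vring.
      rewrite (vdot_comm im N), iA, imA, cp, sp. fold be. rewrite EN.
      apply V3_ext; vunfold; field_simplify; try lra; rewrite hnn; field; lra.
Qed.

Lemma corner_param_reverse Ap Am a a' :
  corner_param Ap Am a -> corner_param (vopp Am) (vopp Ap) a' -> a' = a.
Proof.
  intros [ha e1] [ha' e2].
  assert (E : angle (vopp Am) (vopp (vopp Ap)) = angle Ap (vopp Am))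
    by (unfold angle; f_equal; vunfold; ring).
  rewrite E, e1 in e2. apply exp_inv in e2. pose proof PI_RGT_0.
  assert (PI * ((a' - a) * (a' + a)) = 0) by nra.
  destruct (Rmult_integral _ _ H0) as [h | h]; [lra |].
  destruct (Rmult_integral _ _ h); lra.
Qed.

Theorem proposition2p2 :
  forall (Ap Am : V3) (a as_ : R) (chi chis : R -> R -> V3) (Bp Bm Bps Bms : CV3),
    vnorm Ap = 1 -> vnorm Am = 1 -> vcross Ap Am <> mkV 0 0 0 ->
    corner_param Ap Am a ->
    selfsimilar_solution Ap Am a chi ->
    is_Bplus chi a Bp -> is_Bminus chi a Bm ->
    corner_param (vopp Am) (vopp Ap) as_ ->
    selfsimilar_solution (vopp Am) (vopp Ap) as_ chis ->
    is_Bplus chis as_ Bps -> is_Bminus chis as_ Bms ->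
    rho Ap Am Ap = vopp Am /\ rho Ap Am Am = vopp Ap /\
    Bps = capply (rho Ap Am) Bp /\ Bms = capply (rho Ap Am) Bm /\
    (exists Rm : V3 -> V3, rotation_2theta Am Ap Am Bm Rm /\
        Rm (vopp Am) = vopp Am /\ Bps = capply Rm (cconj Bm)) /\
    (exists Rp : V3 -> V3, rotation_2theta Ap Ap Am Bp Rp /\
        Rp (vopp Ap) = vopp Ap /\ Bms = capply Rp (cconj Bp)).
Proof.
  intros Ap Am a as_ chi chis Bp Bm Bps Bms nAp nAm hN CPa SSa BPa BMa CPs SSs BPs BMs.
  rewrite (corner_param_reverse _ _ _ _ CPa CPs) in *.
  pose proof (vdot_unit _ nAp) as hAp. pose proof (vdot_unit _ nAm) as hAm.
  pose proof (selfsimilar_solution_profile _ _ _ _ (proj1 CPa) SSa) as P.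
  pose proof (selfsimilar_solution_profile _ _ _ _ (proj1 CPa) SSs) as Ps.
  pose proof (reversed_profile_rho _ _ _ _ _ hAp hAm hN P Ps) as Hrho.
  pose proof (reversed_profile_reflection _ _ _ _ _ hN P Ps) as Hrefl.
  destruct (rho_corners _ _ hAp hAm (vcross_neq0_neq _ _ hN)) as [rAp rAm].
  split; [exact rAp | split; [exact rAm | split; [| split; [| split]]]].
  - exact (cvlim_capply_unique _ _ _ _ _ _ (linear_map_rho _ _) Hrho
             (is_Bplus_cvlim _ _ _ BPs) (is_Bplus_cvlim _ _ _ BPa)).
  - exact (cvlim_capply_unique _ _ _ _ _ _ (linear_map_rho _ _) Hrho
             (is_Bminus_cvlim _ _ _ BMs) (is_Bminus_cvlim _ _ _ BMa)).
  - destruct (profile_Bminus _ _ _ _ _ P hAm BMa) as [ONm Cm].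
    rewrite (cvlim_capply_unique _ _ _ _ _ _ (linear_map_plane_reflection _) Hrefl
               (is_Bplus_cvlim _ _ _ BPs) (is_Bminus_cvlim_opp _ _ _ BMa)).
    apply (plane_reflection_rotated_conj _ _ _ _ hAm ONm Cm hN). vunfold; ring.
  - destruct (profile_Bplus _ _ _ _ _ P hAp BPa) as [ONp Cp].
    rewrite (cvlim_capply_unique _ _ _ _ _ _ (linear_map_plane_reflection _) Hrefl
               (is_Bminus_cvlim _ _ _ BMs) (is_Bplus_cvlim_opp _ _ _ BPa)).
    apply (plane_reflection_rotated_conj _ _ _ _ hAp ONp Cp hN). vunfold; ring.
Qed.
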